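(* There exists a non-commutative bilinear algorithm computing the product of two $7\times 7$ matrices using $250$ multiplications. That is, $\langle 7,7,7\rangle\leq 250$.
   Context: Fix a field $\mathbb{K}$. A non-commutative bilinear algorithm for multiplying an $a\times b$ matrix $A$ by a $b\times c$ matrix $B$ using $r$ multiplications consists of $r$ products $t_k=\big(\sum_{i,j}\alpha^{(k)}_{ij}a_{ij}\big)\big(\sum_{j,l}\beta^{(k)}_{jl}b_{jl}\big)$ with scalars $\alpha^{(k)}_{ij},\beta^{(k)}_{jl}\in\mathbb{K}$, together with scalars $\gamma^{(k)}_{il}\in\mathbb{K}$ such that $(AB)_{il}=\sum_{k=1}^r\gamma^{(k)}_{il}t_k$ for all $i,l$. This identity must hold when the entries of $A$ and $B$ lie in an arbitrary, not necessarily commutative, associative $\mathbb{K}$-algebra. The quantity $\langle a,b,c\rangle$ denotes the minimal such $r$, i.e. the tensor rank of the matrix multiplication tensor of format $(a,b,c)$. *)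

From HB Require Import structures.
From mathcomp Require Import all_boot all_order all_algebra.
Set Implicit Arguments. Unset Strict Implicit. Unset Printing Implicit Defensive.
Import GRing.Theory.
Local Open Scope ring_scope.

(* A non-commutative bilinear algorithm for multiplying an a x b matrix by a
   b x c matrix with r multiplications, over the field K:
   t_k = (sum_{i,j} alpha^(k)_{ij} a_{ij}) (sum_{j,l} beta^(k)_{jl} b_{jl}),
   (AB)_{il} = sum_k gamma^(k)_{il} t_k,
   for matrices with entries in an arbitrary (not necessarily commutative)
   associative K-algebra R. *)
Definition is_bilinear_algorithm (K : fieldType) (a b c r : nat)
  (alpha : 'I_r -> 'M[K]_(a, b)) (beta : 'I_r -> 'M[K]_(b, c))
  (gamma : 'I_r -> 'M[K]_(a, c)) : Prop :=
  forall (R : algType K) (A : 'M[R]_(a, b)) (B : 'M[R]_(b, c))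
         (i : 'I_a) (l : 'I_c),
    (A *m B) i l =
      \sum_(k < r) gamma k i l *:
        ((\sum_(i0 < a) \sum_(j0 < b) alpha k i0 j0 *: A i0 j0) *
         (\sum_(j0 < b) \sum_(l0 < c) beta k j0 l0 *: B j0 l0)).

Definition mxmul_rank_le (K : fieldType) (a b c r : nat) : Prop :=
  exists (alpha : 'I_r -> 'M[K]_(a, b)) (beta : 'I_r -> 'M[K]_(b, c))
         (gamma : 'I_r -> 'M[K]_(a, c)),
    is_bilinear_algorithm alpha beta gamma.

(* A decomposition of the matrix multiplication tensor into r rank-one tensors
   alpha_k (x) beta_k (x) gamma_k, i.e. a solution of the Brent equations,
   gives a bilinear algorithm: expanding the products t_k only uses
   bilinearity, never commutes an entry of A with an entry of B, and so works
   over any K-algebra.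
   We exhibit 250 rank-one tensors for <7,7,7> with coefficients in
   {-2, ..., 2}, check the 49^3 Brent equations over the integers by
   computation, and transport them to K along the ring morphism Z -> K. *)

From mathcomp Require Import all_boot all_order all_algebra.
Set Implicit Arguments. Unset Strict Implicit. Unset Printing Implicit Defensive.
Import GRing.Theory.
Local Open Scope ring_scope.

Section BrentEquations.

Variable K : fieldType.

Lemma sum_delta_scale (V : lmodType K) n (i : 'I_n) (F : 'I_n -> V) :
  \sum_(j < n) (j == i)%:R *: F j = F i.
Proof.
rewrite (bigD1 i) //= eqxx scale1r big1 ?addr0 // => j /negbTE->.
by rewrite scale0r.
Qed.

Lemma mulr_sum_scale (R : algType K) (I J : Type) (r : seq I) (s : seq J)
    (f : I -> K) (g : J -> K) (u : I -> R) (v : J -> R) :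
  (\sum_(p <- r) f p *: u p) * (\sum_(q <- s) g q *: v q) =
  \sum_(p <- r) \sum_(q <- s) (f p * g q) *: (u p * v q).
Proof.
rewrite mulr_suml; apply: eq_bigr => p _; rewrite mulr_sumr.
by apply: eq_bigr => q _; rewrite -scalerAl -scalerAr scalerA.
Qed.

Variables (a b c r : nat).
Variables (alpha : 'I_r -> 'M[K]_(a, b)) (beta : 'I_r -> 'M[K]_(b, c)).
Variable gamma : 'I_r -> 'M[K]_(a, c).

Definition brent_equations : Prop :=
  forall (i0 i : 'I_a) (j0 j1 : 'I_b) (l1 l : 'I_c),
    \sum_(k < r) alpha k i0 j0 * beta k j1 l1 * gamma k i l =
    (i0 == i)%:R * (j0 == j1)%:R * (l1 == l)%:R.

Lemma mulmx_delta_expansion (R : algType K) (A : 'M[R]_(a, b))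
    (B : 'M[R]_(b, c)) i l :
  (A *m B) i l =
  \sum_(i0 < a) \sum_(j0 < b) \sum_(j1 < b) \sum_(l1 < c)
    ((i0 == i)%:R * (j0 == j1)%:R * (l1 == l)%:R) *: (A i0 j0 * B j1 l1).
Proof.
symmetry; transitivity (\sum_(i0 < a) (i0 == i)%:R *: \sum_(j0 < b)
  \sum_(j1 < b) (j1 == j0)%:R *: \sum_(l1 < c) (l1 == l)%:R *:
    (A i0 j0 * B j1 l1)).
  apply: eq_bigr => i0 _; rewrite scaler_sumr; apply: eq_bigr => j0 _.
  rewrite scaler_sumr; apply: eq_bigr => j1 _; rewrite !scaler_sumr.
  by apply: eq_bigr => l1 _; rewrite !scalerA (eq_sym j1).
rewrite (sum_delta_scale (V := R)) mxE; apply: eq_bigr => j _.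
by rewrite !sum_delta_scale.
Qed.

Lemma brent_bilinear_algorithm :
  brent_equations -> is_bilinear_algorithm alpha beta gamma.
Proof.
move=> brent R A B i l.
have expand_product k :
  gamma k i l *: ((\sum_(i0 < a) \sum_(j0 < b) alpha k i0 j0 *: A i0 j0) *
                  (\sum_(j1 < b) \sum_(l1 < c) beta k j1 l1 *: B j1 l1)) =
  \sum_(p : 'I_a * 'I_b) \sum_(q : 'I_b * 'I_c)
    (alpha k p.1 p.2 * beta k q.1 q.2 * gamma k i l) *: (A p.1 p.2 * B q.1 q.2).
  rewrite [in LHS]pair_bigA [in LHS]pair_bigA mulr_sum_scale scaler_sumr.
  apply: eq_bigr => p _.
  by rewrite scaler_sumr; apply: eq_bigr => q _; rewrite scalerA mulrC.
rewrite mulmx_delta_expansion.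
under [RHS]eq_bigr => k _ do rewrite expand_product.
rewrite [RHS]exchange_big [in LHS]pair_bigA; apply: eq_bigr => p _.
rewrite [RHS]exchange_big [in LHS]pair_bigA; apply: eq_bigr => q _.
by rewrite -scaler_suml brent.
Qed.

End BrentEquations.

Fixpoint merge_with (T : Type) (f : T -> T -> T) (s1 s2 : seq T) : seq T :=
  match s1, s2 with
  | [::], _ => s2
  | _, [::] => s1
  | x1 :: s1', x2 :: s2' => f x1 x2 :: merge_with f s1' s2'
  end.

Lemma nth_merge_with (T : Type) (f : T -> T -> T) (x0 : T) :
  left_id x0 f -> right_id x0 f ->
  forall s1 s2 i, nth x0 (merge_with f s1 s2) i = f (nth x0 s1 i) (nth x0 s2 i).
Proof.
move=> f0x fx0.
by elim=> [|x1 s1 IH] [|x2 s2] [|i] //=; rewrite ?nth_nil ?f0x ?fx0.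
Qed.

Definition add_table : seq (seq int) -> seq (seq int) -> seq (seq int) :=
  merge_with (merge_with +%R).

Lemma nth_add_table t1 t2 y z :
  nth 0 (nth [::] (add_table t1 t2) y) z =
  nth 0 (nth [::] t1 y) z + nth 0 (nth [::] t2 y) z.
Proof. by rewrite !nth_merge_with //; [exact: add0r | exact: addr0 | case]. Qed.

Definition outer_table (e : int) (u v : seq int) : seq (seq int) :=
  [seq [seq e * s * t | t <- v] | s <- u].

Lemma nth_outer_table e u v y z :
  nth 0 (nth [::] (outer_table e u v) y) z = e * nth 0 u y * nth 0 v z.
Proof.
have [yu|uy] := ltnP y (size u); last first.
  rewrite (nth_default [::]) ?size_map // nth_nil (nth_default 0 uy).
  by rewrite mulr0 mul0r.
have [zv|vz] := ltnP z (size v); last first.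
  by rewrite (nth_map 0) // (nth_default 0 vz) nth_default ?size_map // mulr0.
by rewrite !(nth_map 0).
Qed.

Lemma flat_index_lt n (i j : 'I_n) : (i * n + j < n * n)%N.
Proof.
rewrite (@leq_trans (i.+1 * n)) ?leq_mul2r ?ltn_ord ?orbT //.
by rewrite mulSnr ltn_add2l.
Qed.

Lemma flat_index_div n (i j : 'I_n) : ((i * n + j) %/ n)%N = i.
Proof.
by rewrite divnMDl ?divn_small ?addn0 // (leq_ltn_trans _ (ltn_ord j)).
Qed.

Lemma flat_index_mod n (i j : 'I_n) : ((i * n + j) %% n)%N = j.
Proof. by rewrite modnMDl modn_small. Qed.

(* Sparse vectors of (position, coefficient) pairs; entry (i, j) of an n x n
   matrix sits at position i * n + j.  Positions are [int]s only so that the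
   table below can be written in [int_scope]. *)
Definition spvec := seq (int * int).

Definition spcoef (v : spvec) (x : nat) : int :=
  foldr (fun e s => if e.1 == x%:Z then e.2 + s else s) 0 v.

Definition scheme := seq (spvec * spvec * spvec).

Definition scheme_coef (L : scheme) (x y z : nat) : int :=
  \sum_(t <- L) spcoef t.1.1 x * spcoef t.1.2 y * spcoef t.2 z.

Definition mxmul_coef (n x y z : nat) : int :=
  (divn x n == divn z n)%:R * (modn x n == divn y n)%:R *
  (modn y n == modn z n)%:R.

Definition dense (N : nat) (v : spvec) : seq int := mkseq (spcoef v) N.

Definition slice_table (N : nat) (L : scheme) (x : nat) : seq (seq int) :=
  foldr (fun t acc => let e := spcoef t.1.1 x in
           if e == 0 then acc
           else add_table (outer_table e (dense N t.1.2) (dense N t.2)) acc)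
        [::] L.

Lemma nth_slice_table N L x y z : (y < N)%N -> (z < N)%N ->
  nth 0 (nth [::] (slice_table N L x) y) z = scheme_coef L x y z.
Proof.
move=> yN zN; rewrite /scheme_coef; elim: L => [|t L IH] /=.
  by rewrite big_nil !nth_nil.
rewrite big_cons -IH; case: eqP => [->|_]; first by rewrite !mul0r add0r.
by rewrite nth_add_table nth_outer_table !nth_mkseq.
Qed.

Definition check_scheme (n : nat) (L : scheme) : bool :=
  all (fun x => slice_table (n * n) L x ==
                mkseq (fun y => mkseq (mxmul_coef n x y) (n * n)) (n * n))
      (iota 0 (n * n)).

Lemma check_scheme_sound n L : check_scheme n L ->
  forall x y z, (x < n * n)%N -> (y < n * n)%N -> (z < n * n)%N ->
  scheme_coef L x y z = mxmul_coef n x y z.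
Proof.
move=> /allP ok x y z xn yn zn.
have /eqP slice_x := ok x (etrans (mem_iota 0 _ x) xn).
by rewrite -(nth_slice_table L x yn zn) slice_x !nth_mkseq.
Qed.

Section SchemeAlgorithm.

Variables (K : fieldType) (n : nat) (L : scheme).

Definition spvec_mx (v : spvec) : 'M[K]_n :=
  \matrix_(i, j) (spcoef v (i * n + j))%:~R.

Let t0 : spvec * spvec * spvec := ([::], [::], [::]).

Definition scheme_alpha (k : 'I_(size L)) := spvec_mx (nth t0 L k).1.1.
Definition scheme_beta (k : 'I_(size L)) := spvec_mx (nth t0 L k).1.2.
Definition scheme_gamma (k : 'I_(size L)) := spvec_mx (nth t0 L k).2.

Lemma scheme_brent_equations : check_scheme n L ->
  brent_equations scheme_alpha scheme_beta scheme_gamma.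
Proof.
move=> ok i0 i j0 j1 l1 l.
have := check_scheme_sound ok
  (flat_index_lt i0 j0) (flat_index_lt j1 l1) (flat_index_lt i l).
rewrite /scheme_coef (big_nth t0) big_mkord /mxmul_coef.
rewrite !flat_index_div !flat_index_mod => coef_eq.
under eq_bigr do rewrite !mxE -!intrM.
by rewrite -rmorph_sum coef_eq !rmorphM !rmorph_nat.
Qed.

End SchemeAlgorithm.

Lemma check_scheme_mxmul_rank_le (K : fieldType) n L :
  check_scheme n L -> mxmul_rank_le K n n n (size L).
Proof.
move=> ok.
exists (@scheme_alpha K n L), (@scheme_beta K n L), (@scheme_gamma K n L).
exact/brent_bilinear_algorithm/scheme_brent_equations.
Qed.

Section Scheme777.
Local Open Scope int_scope.

Definition scheme777 : scheme := [::
  ([:: (0, 1); (8, 1); (16, 1); (24, 1); (32, 1); (40, 1); (48, 1)], [:: (0, 1); (8, 1); (16, 1); (24, 1); (32, 1); (40, 1); (48, 1)], [:: (0, 1); (8, 1); (16, 1); (24, 1); (32, 1); (40, 1); (48, 1)]);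
  ([:: (7, 1); (8, 1); (31, 1); (32, 1); (47, 1); (48, 1)], [:: (0, 1); (16, 1); (24, 1); (40, 1)], [:: (7, 1); (8, -1); (31, 1); (32, -1); (47, 1); (48, -1)]);
  ([:: (0, 1); (16, 1); (24, 1); (40, 1)], [:: (1, 1); (8, -1); (25, 1); (32, -1); (41, 1); (48, -1)], [:: (1, 1); (8, 1); (25, 1); (32, 1); (41, 1); (48, 1)]);
  ([:: (8, 1); (32, 1); (48, 1)], [:: (0, -1); (7, 1); (16, -1); (24, -1); (31, 1); (40, -1); (47, 1)], [:: (0, 1); (7, 1); (16, 1); (24, 1); (31, 1); (40, 1); (47, 1)]);
  ([:: (0, 1); (1, 1); (16, 1); (24, 1); (25, 1); (40, 1); (41, 1)], [:: (8, 1); (32, 1); (48, 1)], [:: (0, -1); (1, 1); (16, -1); (24, -1); (25, 1); (40, -1); (41, 1)]);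
  ([:: (0, -1); (7, 1); (16, -1); (24, -1); (31, 1); (40, -1); (47, 1)], [:: (0, 1); (1, 1); (16, 1); (24, 1); (25, 1); (40, 1); (41, 1)], [:: (8, 1); (32, 1); (48, 1)]);
  ([:: (1, 1); (8, -1); (25, 1); (32, -1); (41, 1); (48, -1)], [:: (7, 1); (8, 1); (31, 1); (32, 1); (47, 1); (48, 1)], [:: (0, 1); (16, 1); (24, 1); (40, 1)]);
  ([:: (14, 1); (16, 1); (38, 1); (40, 1); (46, 1); (48, 1)], [:: (0, 1); (8, 1); (24, 1); (32, 1)], [:: (14, 1); (16, -1); (38, 1); (40, -1); (46, 1); (48, -1)]);
  ([:: (45, 1); (46, 1); (47, 1); (48, 1)], [:: (0, 1); (24, 1)], [:: (45, 1); (46, -1); (47, -1); (48, 1)]);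
  ([:: (14, 1); (16, 1); (38, 1); (40, 1)], [:: (1, 1); (8, -1); (25, 1); (32, -1)], [:: (15, 1); (39, 1); (41, -1); (46, 1); (48, -1)]);
  ([:: (46, 1); (48, 1)], [:: (0, -1); (7, 1); (24, -1); (31, 1)], [:: (14, 1); (16, -1); (38, 1); (40, -1); (45, 1); (47, -1)]);
  ([:: (14, 1); (15, 1); (16, 1); (38, 1); (39, 1); (40, 1); (41, 1)], [:: (8, 1); (32, 1)], [:: (14, -1); (15, 1); (16, 1); (38, -1); (39, 1); (40, 1); (41, -1)]);
  ([:: (14, -1); (16, -1); (38, -1); (40, -1); (45, 1); (47, 1)], [:: (0, 1); (1, 1); (24, 1); (25, 1)], [:: (46, 1); (48, -1)]);
  ([:: (15, 1); (39, 1); (41, 1); (46, -1); (48, -1)], [:: (7, 1); (8, 1); (31, 1); (32, 1)], [:: (14, 1); (16, -1); (38, 1); (40, -1)]);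
  ([:: (0, 1); (8, 1); (24, 1); (32, 1)], [:: (2, 1); (16, -1); (26, 1); (34, 1); (40, -1); (48, -1)], [:: (2, 1); (16, 1); (26, 1); (34, 1); (40, 1); (48, 1)]);
  ([:: (7, 1); (8, 1); (31, 1); (32, 1)], [:: (2, 1); (16, -1); (26, 1); (40, -1)], [:: (9, 1); (33, 1); (34, -1); (47, 1); (48, -1)]);
  ([:: (0, 1); (24, 1)], [:: (27, 1); (34, -1); (41, -1); (48, 1)], [:: (27, 1); (34, 1); (41, 1); (48, 1)]);
  ([:: (8, 1); (32, 1)], [:: (2, -1); (9, 1); (16, 1); (26, -1); (33, 1); (40, 1); (47, -1)], [:: (2, 1); (9, 1); (16, 1); (26, 1); (33, 1); (40, 1); (47, 1)]);
  ([:: (0, 1); (1, 1); (24, 1); (25, 1)], [:: (34, 1); (48, -1)], [:: (2, -1); (16, -1); (26, -1); (27, 1); (40, -1); (41, 1)]);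
  ([:: (0, -1); (7, 1); (24, -1); (31, 1)], [:: (2, 1); (16, -1); (26, 1); (27, 1); (40, -1); (41, -1)], [:: (34, 1); (48, 1)]);
  ([:: (1, 1); (8, -1); (25, 1); (32, -1)], [:: (9, 1); (33, 1); (34, 1); (47, -1); (48, -1)], [:: (2, 1); (16, 1); (26, 1); (40, 1)]);
  ([:: (16, 1); (40, 1); (48, 1)], [:: (0, -1); (8, -1); (14, 1); (24, -1); (32, -1); (38, 1); (46, 1)], [:: (0, 1); (8, 1); (14, 1); (24, 1); (32, 1); (38, 1); (46, 1)]);
  ([:: (47, 1); (48, 1)], [:: (0, -1); (14, 1); (24, -1); (38, 1)], [:: (7, 1); (8, -1); (31, 1); (32, -1); (45, 1); (46, -1)]);
  ([:: (16, 1); (40, 1)], [:: (1, -1); (8, 1); (15, 1); (25, -1); (32, 1); (39, 1); (46, -1)], [:: (1, 1); (8, 1); (15, 1); (25, 1); (32, 1); (39, 1); (46, 1)]);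
  ([:: (48, 1)], [:: (0, 1); (7, -1); (14, -1); (24, 1); (31, -1); (38, -1); (45, 1)], [:: (0, 1); (7, 1); (14, 1); (24, 1); (31, 1); (38, 1); (45, 1)]);
  ([:: (16, 1); (40, 1); (41, 1)], [:: (8, -1); (32, -1); (46, 1)], [:: (0, -1); (1, 1); (14, -1); (15, 1); (24, -1); (25, 1); (38, -1); (39, 1)]);
  ([:: (16, -1); (40, -1); (47, 1)], [:: (0, -1); (1, -1); (14, 1); (15, 1); (24, -1); (25, -1); (38, 1); (39, 1)], [:: (8, 1); (32, 1); (46, 1)]);
  ([:: (41, 1); (48, -1)], [:: (7, -1); (8, -1); (31, -1); (32, -1); (45, 1); (46, 1)], [:: (0, 1); (14, 1); (24, 1); (38, 1)]);
  ([:: (0, 1); (2, 1); (8, 1); (24, 1); (26, 1); (32, 1); (34, 1)], [:: (16, 1); (40, 1); (48, 1)], [:: (0, -1); (2, 1); (8, -1); (24, -1); (26, 1); (32, -1); (34, 1)]);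
  ([:: (7, 1); (8, 1); (9, 1); (31, 1); (32, 1); (33, 1); (34, 1)], [:: (16, 1); (40, 1)], [:: (7, -1); (8, 1); (9, 1); (31, -1); (32, 1); (33, 1); (34, -1)]);
  ([:: (0, 1); (2, 1); (24, 1); (26, 1)], [:: (41, 1); (48, -1)], [:: (1, -1); (8, -1); (25, -1); (27, 1); (32, -1); (34, 1)]);
  ([:: (8, 1); (32, 1); (34, 1)], [:: (16, -1); (40, -1); (47, 1)], [:: (0, -1); (2, 1); (7, -1); (9, 1); (24, -1); (26, 1); (31, -1); (33, 1)]);
  ([:: (0, 1); (1, 1); (2, 1); (24, 1); (25, 1); (26, 1); (27, 1)], [:: (48, 1)], [:: (0, 1); (1, -1); (2, -1); (24, 1); (25, -1); (26, -1); (27, 1)]);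
  ([:: (0, -1); (2, -1); (7, 1); (9, 1); (24, -1); (26, -1); (31, 1); (33, 1)], [:: (16, 1); (40, 1); (41, 1)], [:: (8, -1); (32, -1); (34, 1)]);
  ([:: (1, 1); (8, -1); (25, 1); (27, 1); (32, -1); (34, -1)], [:: (47, 1); (48, 1)], [:: (0, -1); (2, 1); (24, -1); (26, 1)]);
  ([:: (0, -1); (8, -1); (14, 1); (24, -1); (32, -1); (38, 1); (46, 1)], [:: (0, 1); (2, 1); (8, 1); (24, 1); (26, 1); (32, 1); (34, 1)], [:: (16, 1); (40, 1); (48, 1)]);
  ([:: (7, -1); (8, -1); (31, -1); (32, -1); (45, 1); (46, 1)], [:: (0, 1); (2, 1); (24, 1); (26, 1)], [:: (47, 1); (48, -1)]);
  ([:: (0, -1); (14, 1); (24, -1); (38, 1)], [:: (1, 1); (8, -1); (25, 1); (27, 1); (32, -1); (34, -1)], [:: (41, 1); (48, 1)]);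
  ([:: (8, -1); (32, -1); (46, 1)], [:: (0, -1); (2, -1); (7, 1); (9, 1); (24, -1); (26, -1); (31, 1); (33, 1)], [:: (16, 1); (40, 1); (47, 1)]);
  ([:: (0, -1); (1, -1); (14, 1); (15, 1); (24, -1); (25, -1); (38, 1); (39, 1)], [:: (8, 1); (32, 1); (34, 1)], [:: (16, -1); (40, -1); (41, 1)]);
  ([:: (0, 1); (7, -1); (14, -1); (24, 1); (31, -1); (38, -1); (45, 1)], [:: (0, 1); (1, 1); (2, 1); (24, 1); (25, 1); (26, 1); (27, 1)], [:: (48, 1)]);
  ([:: (1, -1); (8, 1); (15, 1); (25, -1); (32, 1); (39, 1); (46, -1)], [:: (7, 1); (8, 1); (9, 1); (31, 1); (32, 1); (33, 1); (34, 1)], [:: (16, 1); (40, 1)]);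
  ([:: (2, 1); (16, -1); (26, 1); (34, 1); (40, -1); (48, -1)], [:: (14, 1); (16, 1); (38, 1); (40, 1); (46, 1); (48, 1)], [:: (0, 1); (8, 1); (24, 1); (32, 1)]);
  ([:: (9, 1); (33, 1); (34, 1); (47, -1); (48, -1)], [:: (14, 1); (16, 1); (38, 1); (40, 1)], [:: (7, 1); (8, -1); (31, 1); (32, -1)]);
  ([:: (2, 1); (16, -1); (26, 1); (40, -1)], [:: (15, 1); (39, 1); (41, 1); (46, -1); (48, -1)], [:: (1, 1); (8, 1); (25, 1); (32, 1)]);
  ([:: (34, 1); (48, -1)], [:: (14, -1); (16, -1); (38, -1); (40, -1); (45, 1); (47, 1)], [:: (0, 1); (7, 1); (24, 1); (31, 1)]);
  ([:: (2, 1); (16, -1); (26, 1); (27, 1); (40, -1); (41, -1)], [:: (46, 1); (48, 1)], [:: (0, -1); (1, 1); (24, -1); (25, 1)]);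
  ([:: (2, -1); (9, 1); (16, 1); (26, -1); (33, 1); (40, 1); (47, -1)], [:: (14, 1); (15, 1); (16, 1); (38, 1); (39, 1); (40, 1); (41, 1)], [:: (8, 1); (32, 1)]);
  ([:: (27, 1); (34, -1); (41, -1); (48, 1)], [:: (45, 1); (46, 1); (47, 1); (48, 1)], [:: (0, 1); (24, 1)]);
  ([:: (35, 1); (36, -1); (38, 1); (39, -1)], [:: (9, 1); (16, -1)], [:: (35, 1); (37, -1); (38, -1); (40, 1); (42, 1); (44, -1); (45, -1); (47, 1)]);
  ([:: (29, 1); (32, 1); (36, 1); (39, 1)], [:: (7, 1); (8, 1); (9, 1); (14, -1); (15, -1); (16, -1)], [:: (36, 1); (39, -1); (43, 1); (46, -1)]);
  ([:: (21, -1); (22, 2); (23, 1); (24, -1); (25, 2); (26, 1); (43, -1); (44, -1); (46, -1); (47, -1)], [:: (0, 1); (2, 1); (16, 1)], [:: (21, -1); (22, 1); (24, 1); (25, -1); (44, -1); (47, 1)]);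
  ([:: (21, -1); (22, 1); (24, -1); (25, 1)], [:: (2, 1); (16, 1)], [:: (21, 1); (22, -1); (23, -1); (24, -1); (25, 1); (26, 1); (30, -1); (33, 1)]);
  ([:: (35, -1); (36, 1); (38, -1); (39, 1); (42, 1); (43, -1); (45, 1); (46, -1)], [:: (0, -1)], [:: (28, 1); (29, -1); (31, -1); (32, 1); (42, -1); (43, 1); (44, 1); (45, 1); (46, -1); (47, -1)]);
  ([:: (36, -1); (37, -1); (39, -1); (40, -1)], [:: (0, -1); (1, -1); (7, -1); (8, -1)], [:: (22, -1); (23, 1); (25, 1); (26, -1); (28, -1); (30, 1); (31, 1); (33, -1); (35, 1); (37, -1); (38, -1); (40, 1); (44, 1); (47, -1)]);
  ([:: (22, 1); (25, 1); (35, 1); (38, 1)], [:: (2, -1); (9, -1); (16, 1)], [:: (30, 1); (33, -1); (37, -1); (40, 1)]);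
  ([:: (28, -1); (29, 2); (30, 1); (31, -1); (32, 2); (33, 1); (36, 1); (37, 1); (39, 1); (40, 1)], [:: (0, -1); (1, -1)], [:: (29, 1); (30, -1); (32, -1); (33, 1); (43, -1); (46, 1)]);
  ([:: (22, -1); (25, -1); (43, 1); (46, 1)], [:: (7, -1); (9, -1); (14, 1); (16, 1)], [:: (35, -1); (36, 1); (38, 1); (39, -1); (42, -1); (43, 1); (45, 1); (46, -1)]);
  ([:: (23, 1); (26, 1); (29, -1); (30, -1); (32, -1); (33, -1); (36, -1); (37, -1); (39, -1); (40, -1)], [:: (14, -1); (15, -1); (16, -1)], [:: (22, -1); (25, 1)]);
  ([:: (22, -1); (25, -1)], [:: (0, 1); (1, 1); (2, 1); (7, 1); (8, 1); (9, 1)], [:: (21, 1); (22, -1); (23, -1); (24, -1); (25, 1); (26, 1); (30, -1); (33, 1); (35, 1); (36, -1); (37, 1); (38, -1); (39, 1); (40, -1); (42, 1); (43, -1); (44, -1); (45, -1); (46, 1); (47, 1)]);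
  ([:: (28, -1); (29, 2); (30, 1); (31, -1); (32, 2); (33, 1); (35, 1); (38, 1); (42, -1); (43, 1); (44, 1); (45, -1); (46, 1); (47, 1)], [:: (15, 1)], [:: (43, 1); (46, -1)]);
  ([:: (21, 1); (22, -1); (23, -1); (24, 1); (25, -1); (26, -1); (42, -1); (43, 1); (44, 1); (45, -1); (46, 1); (47, 1)], [:: (0, -1); (2, -1)], [:: (44, 1); (47, -1)]);
  ([:: (29, -1); (32, -1); (36, -1); (37, -1); (39, -1); (40, -1)], [:: (0, -1); (1, -1); (7, -1); (8, -1); (14, 1); (15, 1)], [:: (29, 1); (32, -1); (36, -1); (39, 1); (43, -1); (46, 1)]);
  ([:: (22, -1); (25, -1); (35, 1); (36, -1); (38, 1); (39, -1); (43, 1); (46, 1)], [:: (0, 1); (9, -1); (16, 1)], [:: (35, 1); (36, -1); (38, -1); (39, 1); (42, 1); (43, -1); (44, -1); (45, -1); (46, 1); (47, 1)]);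
  ([:: (28, -1); (29, 2); (31, -1); (32, 2); (35, 1); (38, 1); (42, -1); (45, -1)], [:: (1, 1); (15, 1)], [:: (28, 1); (29, -1); (31, -1); (32, 1)]);
  ([:: (29, -1); (30, -1); (32, -1); (33, -1); (36, -1); (37, -1); (39, -1); (40, -1)], [:: (0, -1); (1, -1); (14, -1); (15, -1)], [:: (22, 1); (25, -1); (28, 1); (31, -1)]);
  ([:: (21, 1); (22, -1); (24, 1); (25, -1); (28, -1); (31, -1); (35, -1); (38, -1)], [:: (0, 1); (1, 1); (2, 1)], [:: (30, -1); (33, 1)]);
  ([:: (43, 1); (44, 1); (46, 1); (47, 1)], [:: (14, 1)], [:: (21, 1); (22, -1); (24, -1); (25, 1); (42, 1); (45, -1)]);
  ([:: (37, -1); (40, -1); (43, -1); (46, -1)], [:: (0, 1); (1, 1); (7, 1); (8, 1); (14, -1)], [:: (28, -1); (29, 1); (31, 1); (32, -1); (35, 1); (36, -1); (38, -1); (39, 1); (43, -1); (46, 1)]);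
  ([:: (22, 1); (25, 1)], [:: (0, 2); (1, 1); (2, 1); (7, 2); (8, 1); (9, 1); (14, -1)], [:: (21, 1); (22, -1); (24, -1); (25, 1); (35, 1); (36, -1); (38, -1); (39, 1); (42, 1); (43, -1); (45, -1); (46, 1)]);
  ([:: (22, 1); (23, 1); (25, 1); (26, 1); (43, -1); (44, -1); (46, -1); (47, -1)], [:: (0, 1); (2, 1); (14, 1); (16, 1)], [:: (21, 1); (22, -1); (24, -1); (25, 1)]);
  ([:: (28, -1); (29, 2); (30, 1); (31, -1); (32, 2); (33, 1); (35, 1); (37, 1); (38, 1); (40, 1); (42, -1); (43, 1); (45, -1); (46, 1)], [:: (0, -1); (1, -1); (15, -1)], [:: (28, 1); (29, -1); (31, -1); (32, 1); (43, 1); (46, -1)]);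
  ([:: (21, -1); (22, 1); (24, -1); (25, 1); (29, 1); (30, 1); (32, 1); (33, 1); (36, 1); (37, 1); (39, 1); (40, 1)], [:: (0, -1); (1, -1); (16, 1)], [:: (22, 1); (25, -1); (30, 1); (33, -1)]);
  ([:: (22, -1); (25, -1); (36, -1); (37, -1); (39, -1); (40, -1)], [:: (0, -1); (1, -1); (7, -1); (8, -1); (16, -1)], [:: (22, 1); (23, -1); (25, -1); (26, 1); (30, -1); (33, 1); (37, 1); (40, -1); (44, -1); (47, 1)]);
  ([:: (36, -1); (39, -1); (43, 1); (46, 1)], [:: (1, -1); (8, -1)], [:: (28, 1); (29, -1); (31, -1); (32, 1); (35, -1); (36, 1); (38, 1); (39, -1)]);
  ([:: (21, 1); (22, -2); (23, -1); (24, 1); (25, -2); (26, -1); (36, -1); (37, -1); (39, -1); (40, -1)], [:: (16, 1)], [:: (22, 1); (23, -1); (25, -1); (26, 1); (44, -1); (47, 1)]);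
  ([:: (29, 1); (32, 1); (36, 1); (39, 1); (43, -1); (46, -1)], [:: (0, 1); (1, -1); (7, 1); (14, -1); (15, -1)], [:: (28, 1); (29, -1); (31, -1); (32, 1)]);
  ([:: (29, -1); (32, -1); (35, -1); (38, -1)], [:: (0, 1); (1, 1); (9, -1); (16, 1)], [:: (30, 1); (33, -1); (36, -1); (39, 1); (43, -1); (46, 1)]);
  ([:: (9, 1); (16, -1)], [:: (5, 1); (6, 1); (19, -1); (20, -1); (26, -1); (27, -1); (40, 1); (41, 1)], [:: (5, 1); (12, -1); (26, 1); (33, -1)]);
  ([:: (7, 1); (8, 1); (9, 1); (14, -1); (15, -1); (16, -1)], [:: (12, 1); (13, 1); (33, -1); (34, -1)], [:: (11, 1); (12, 1); (32, 1); (33, 1)]);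
  ([:: (0, 1); (2, 1); (16, 1)], [:: (3, -1); (10, 1); (20, -1); (24, 1); (31, -1); (41, 1)], [:: (3, -1); (10, 2); (13, -1); (17, 1); (20, -1); (24, -1); (31, 2); (34, -1); (38, 1); (41, -1)]);
  ([:: (2, 1); (16, 1)], [:: (3, 1); (10, -1); (17, -1); (18, -1); (24, -1); (31, 1); (38, 1); (39, 1)], [:: (3, -1); (10, 1); (24, -1); (31, 1)]);
  ([:: (0, -1)], [:: (4, 1); (6, -1); (11, -1); (13, 1); (20, 1); (25, -1); (27, 1); (32, 1); (34, -1); (41, -1)], [:: (5, -1); (6, 1); (12, 1); (13, -1); (26, -1); (27, 1); (33, 1); (34, -1)]);
  ([:: (0, -1); (1, -1); (7, -1); (8, -1)], [:: (4, -1); (5, 1); (10, -1); (17, 1); (18, 1); (19, -1); (20, 1); (25, 1); (26, -1); (31, 1); (38, -1); (39, -1); (40, 1); (41, -1)], [:: (12, -1); (19, -1); (33, -1); (40, -1)]);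
  ([:: (2, -1); (9, -1); (16, 1)], [:: (18, 1); (19, -1); (39, -1); (40, 1)], [:: (5, 1); (10, 1); (26, 1); (31, 1)]);
  ([:: (0, -1); (1, -1)], [:: (11, 1); (13, -1); (18, -1); (32, -1); (34, 1); (39, 1)], [:: (4, -1); (11, 2); (12, 1); (18, 1); (19, 1); (25, -1); (32, 2); (33, 1); (39, 1); (40, 1)]);
  ([:: (7, -1); (9, -1); (14, 1); (16, 1)], [:: (5, -1); (6, -1); (12, 1); (13, 1); (26, 1); (27, 1); (33, -1); (34, -1)], [:: (10, -1); (13, 1); (31, -1); (34, 1)]);
  ([:: (14, -1); (15, -1); (16, -1)], [:: (10, -1); (31, 1)], [:: (11, -1); (12, -1); (17, 1); (18, -1); (19, -1); (32, -1); (33, -1); (38, 1); (39, -1); (40, -1)]);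
  ([:: (0, 1); (1, 1); (2, 1); (7, 1); (8, 1); (9, 1)], [:: (3, 1); (5, 1); (6, 1); (10, -1); (12, -1); (13, -1); (17, -1); (18, -1); (19, 1); (20, -1); (24, -1); (26, -1); (27, -1); (31, 1); (33, 1); (34, 1); (38, 1); (39, 1); (40, -1); (41, 1)], [:: (10, -1); (31, -1)]);
  ([:: (15, 1)], [:: (13, 1); (34, -1)], [:: (4, -1); (5, 1); (6, -1); (11, 2); (13, 1); (18, 1); (20, 1); (25, -1); (26, 1); (27, -1); (32, 2); (34, 1); (39, 1); (41, 1)]);
  ([:: (0, -1); (2, -1)], [:: (20, 1); (41, -1)], [:: (3, 1); (6, -1); (10, -1); (13, 1); (17, -1); (20, 1); (24, 1); (27, -1); (31, -1); (34, 1); (38, -1); (41, 1)]);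
  ([:: (0, -1); (1, -1); (7, -1); (8, -1); (14, 1); (15, 1)], [:: (11, 1); (12, -1); (13, -1); (32, -1); (33, 1); (34, 1)], [:: (11, -1); (12, -1); (19, -1); (32, -1); (33, -1); (40, -1)]);
  ([:: (0, 1); (9, -1); (16, 1)], [:: (5, 1); (6, 1); (12, -1); (13, -1); (20, -1); (26, -1); (27, -1); (33, 1); (34, 1); (41, 1)], [:: (5, 1); (10, -1); (12, -1); (13, 1); (26, 1); (31, -1); (33, -1); (34, 1)]);
  ([:: (1, 1); (15, 1)], [:: (4, 1); (11, -1); (25, -1); (32, 1)], [:: (4, -1); (5, 1); (6, -1); (11, 2); (25, -1); (26, 1); (27, -1); (32, 2)]);
  ([:: (0, -1); (1, -1); (14, -1); (15, -1)], [:: (4, 1); (10, 1); (25, -1); (31, -1)], [:: (11, -1); (12, -1); (18, -1); (19, -1); (32, -1); (33, -1); (39, -1); (40, -1)]);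
  ([:: (0, 1); (1, 1); (2, 1)], [:: (18, -1); (39, 1)], [:: (3, 1); (4, -1); (5, -1); (10, -1); (24, 1); (25, -1); (26, -1); (31, -1)]);
  ([:: (14, 1)], [:: (3, 1); (6, 1); (10, -1); (24, -1); (27, -1); (31, 1)], [:: (13, 1); (20, 1); (34, 1); (41, 1)]);
  ([:: (0, 1); (1, 1); (7, 1); (8, 1); (14, -1)], [:: (4, -1); (5, 1); (11, 1); (12, -1); (13, -1); (25, 1); (26, -1); (32, -1); (33, 1); (34, 1)], [:: (13, -1); (19, -1); (34, -1); (40, -1)]);
  ([:: (0, 2); (1, 1); (2, 1); (7, 2); (8, 1); (9, 1); (14, -1)], [:: (3, 1); (5, 1); (6, 1); (10, -1); (12, -1); (13, -1); (24, -1); (26, -1); (27, -1); (31, 1); (33, 1); (34, 1)], [:: (10, 1); (31, 1)]);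
  ([:: (0, 1); (2, 1); (14, 1); (16, 1)], [:: (3, 1); (10, -1); (24, -1); (31, 1)], [:: (10, 1); (13, -1); (17, 1); (20, -1); (31, 1); (34, -1); (38, 1); (41, -1)]);
  ([:: (0, -1); (1, -1); (15, -1)], [:: (4, 1); (11, -1); (13, 1); (25, -1); (32, 1); (34, -1)], [:: (4, -1); (5, 1); (6, -1); (11, 2); (13, 1); (18, 1); (19, 1); (25, -1); (26, 1); (27, -1); (32, 2); (34, 1); (39, 1); (40, 1)]);
  ([:: (0, -1); (1, -1); (16, 1)], [:: (10, 1); (18, 1); (31, -1); (39, -1)], [:: (3, -1); (10, 1); (11, 1); (12, 1); (18, 1); (19, 1); (24, -1); (31, 1); (32, 1); (33, 1); (39, 1); (40, 1)]);
  ([:: (0, -1); (1, -1); (7, -1); (8, -1); (16, -1)], [:: (10, 1); (17, -1); (18, -1); (19, 1); (20, -1); (31, -1); (38, 1); (39, 1); (40, -1); (41, 1)], [:: (10, -1); (12, -1); (19, -1); (31, -1); (33, -1); (40, -1)]);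
  ([:: (1, -1); (8, -1)], [:: (4, 1); (5, -1); (11, -1); (12, 1); (25, -1); (26, 1); (32, 1); (33, -1)], [:: (12, -1); (13, 1); (33, -1); (34, 1)]);
  ([:: (16, 1)], [:: (10, 1); (17, -1); (20, -1); (31, -1); (38, 1); (41, 1)], [:: (3, 1); (10, -2); (12, -1); (17, -1); (19, -1); (24, 1); (31, -2); (33, -1); (38, -1); (40, -1)]);
  ([:: (0, 1); (1, -1); (7, 1); (14, -1); (15, -1)], [:: (4, 1); (11, -1); (25, -1); (32, 1)], [:: (11, 1); (12, 1); (13, -1); (32, 1); (33, 1); (34, -1)]);
  ([:: (0, 1); (1, 1); (9, -1); (16, 1)], [:: (12, -1); (13, -1); (18, 1); (33, 1); (34, 1); (39, -1)], [:: (5, -1); (11, -1); (26, -1); (32, -1)]);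
  ([:: (31, 1)], [:: (1, -1); (2, -1); (8, 1); (9, 1); (22, 1); (23, 1); (29, -1); (30, -1)], [:: (9, 1); (16, -1); (30, 1); (37, -1)]);
  ([:: (27, 1); (41, 1); (48, 1)], [:: (2, -1); (7, -1); (14, -1); (23, 1); (28, 1); (35, 1); (42, 1); (43, 1); (44, 1)], [:: (42, 1); (43, -1); (44, 1)]);
  ([:: (31, 1); (32, 1); (46, 1)], [:: (8, -1); (9, -1); (15, -1); (16, -1); (29, 1); (30, 1); (36, 1); (37, 1)], [:: (7, 1); (9, 1); (28, 1); (30, 1)]);
  ([:: (38, 1); (39, 1); (45, 1)], [:: (0, -1); (1, -1); (21, 1); (22, 1)], [:: (2, -1); (14, 1); (16, 1); (23, -1); (35, 1); (37, 1)]);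
  ([:: (25, 1); (26, -1); (32, 1); (33, -1); (34, 1); (39, 1); (40, -1); (46, 1); (47, -1)], [:: (8, 1); (15, 1); (16, 1); (29, -1); (36, -1); (37, -1)], [:: (7, 1); (8, -1); (9, 1); (28, 1); (29, -1); (30, 1)]);
  ([:: (24, 1); (25, 1); (27, -1); (38, 1); (39, 1); (41, -1); (45, 1); (46, 1); (48, -1)], [:: (8, -1); (9, -1); (15, -1); (16, -1); (29, 1); (30, 1); (36, 1); (37, 1)], [:: (2, 1); (23, 1)]);
  ([:: (46, 1); (47, -1)], [:: (15, 1); (36, -1); (43, -1)], [:: (2, -1); (7, 1); (8, -1); (15, -1); (16, 1); (23, -1); (28, 1); (29, -1); (36, -1); (37, 1); (43, 1)]);
  ([:: (41, 1); (46, -1); (48, 1)], [:: (42, -1); (43, -1)], [:: (0, 1); (21, 1); (42, -1)]);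
  ([:: (41, 1); (46, -1); (47, 1)], [:: (14, -1); (35, 1); (43, -1)], [:: (0, -1); (1, 1); (2, -1); (15, -1); (16, 1); (21, -1); (22, 1); (23, -1); (36, -1); (37, 1); (42, 1)]);
  ([:: (41, 1)], [:: (0, -1); (2, 1); (14, -1); (21, 1); (23, -1); (35, 1); (42, 1); (43, -1); (44, -1)], [:: (14, 1); (35, 1); (42, -1)]);
  ([:: (45, 1)], [:: (1, -1); (2, -1); (22, 1); (23, 1); (43, 1); (44, 1)], [:: (2, 1); (14, -1); (16, -1); (23, 1); (35, -1); (37, -1); (43, 1)]);
  ([:: (32, 1); (34, -1); (39, 1)], [:: (7, -1); (9, 1); (15, 1); (16, 1); (28, 1); (30, -1); (36, -1); (37, -1)], [:: (7, 1); (28, 1)]);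
  ([:: (24, 1); (25, 1); (26, -1); (41, -1); (46, 1); (47, -1)], [:: (14, 1); (35, -1)], [:: (0, 1); (1, -1); (2, 1); (14, -1); (15, 1); (16, -1); (21, 1); (22, -1); (23, 1); (35, -1); (36, 1); (37, -1)]);
  ([:: (24, -1); (27, 1); (31, -1); (38, -1); (41, 1); (45, -1); (48, 1)], [:: (2, 1); (8, -1); (9, -1); (15, -1); (16, -1); (23, -1); (29, 1); (30, 1); (36, 1); (37, 1)], [:: (2, 1); (23, 1)]);
  ([:: (34, 1); (46, -1); (47, 1)], [:: (16, -1); (37, 1); (43, -1)], [:: (2, -1); (7, 1); (8, -1); (23, -1); (28, 1); (29, -1); (44, 1)]);
  ([:: (27, 1); (41, 1); (46, -1); (47, 1)], [:: (43, -1)], [:: (0, 1); (1, -1); (2, 1); (21, 1); (22, -1); (23, 1); (42, -1); (43, 1); (44, -1)]);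
  ([:: (46, 1)], [:: (7, 1); (8, 1); (14, 1); (15, 1); (28, -1); (29, -1); (35, -1); (36, -1); (42, -1); (43, -1)], [:: (2, 1); (7, 1); (9, 1); (23, 1); (28, 1); (30, 1); (43, -1)]);
  ([:: (31, 1); (39, -1)], [:: (0, -1); (1, -1); (8, 1); (9, 1); (15, 1); (16, 1); (21, 1); (22, 1); (29, -1); (30, -1); (36, -1); (37, -1)], [:: (2, -1); (7, 1); (16, 1); (23, -1); (28, 1); (37, 1)]);
  ([:: (25, -1); (26, 1); (39, -1); (40, 1); (46, -1); (47, 1)], [:: (1, -1); (8, 1); (22, 1); (29, -1)], [:: (1, 1); (2, -1); (7, 1); (8, -1); (9, 1); (22, 1); (23, -1); (28, 1); (29, -1); (30, 1)]);
  ([:: (41, 1); (45, 1)], [:: (0, 1); (2, -1); (21, -1); (23, 1); (43, 1); (44, 1)], [:: (2, -1); (14, 1); (16, 1); (23, -1); (35, 1); (37, 1); (42, -1)]);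
  ([:: (39, 1)], [:: (0, -1); (1, -1); (7, 1); (14, 1); (21, 1); (22, 1); (28, -1); (35, -1)], [:: (7, 1); (14, -1); (28, 1); (35, -1)]);
  ([:: (24, -1); (25, -1); (26, 1); (38, -1); (39, -1); (40, 1); (46, -1); (47, 1)], [:: (1, 1); (22, -1)], [:: (2, 1); (14, -1); (15, 1); (16, -1); (23, 1); (35, -1); (36, 1); (37, -1)]);
  ([:: (27, -1); (41, -1); (45, 1); (48, -1)], [:: (2, -1); (23, 1); (43, 1); (44, 1)], [:: (2, -1); (23, -1); (42, 1); (43, -1); (44, 1)]);
  ([:: (24, 1); (25, 1); (27, -1); (41, -1); (46, 1); (48, -1)], [:: (0, -1); (14, -1); (21, 1); (35, 1)], [:: (0, 1); (21, 1)]);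
  ([:: (34, 1)], [:: (7, 1); (9, -1); (14, 1); (16, -2); (28, -1); (30, 1); (35, -1); (37, 2); (42, -1); (43, -1); (44, 1)], [:: (2, 1); (9, 1); (23, 1); (30, 1); (44, -1)]);
  ([:: (38, 1); (39, 1); (40, -1); (41, -1)], [:: (15, -1); (16, -1); (36, 1); (37, 1)], [:: (2, 1); (16, -1); (23, 1); (37, -1)]);
  ([:: (25, 1); (27, -1); (41, -1); (46, 1); (48, -1)], [:: (0, 1); (7, -1); (21, -1); (28, 1)], [:: (0, 1); (21, 1)]);
  ([:: (34, -1); (46, -1)], [:: (7, 1); (9, -1); (14, 1); (16, -1); (28, -1); (30, 1); (35, -1); (37, 1); (42, -1); (43, -1)], [:: (2, 1); (7, 1); (9, 1); (23, 1); (28, 1); (30, 1); (44, -1)]);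
  ([:: (34, 1); (45, -1); (48, 1)], [:: (43, -1); (44, -1)], [:: (2, 1); (23, 1); (44, -1)]);
  ([:: (24, 1); (25, 1); (26, -1); (39, 1); (40, -1); (46, 1); (47, -1)], [:: (1, -1); (14, 1); (22, 1); (35, -1)], [:: (1, 1); (2, -1); (14, 1); (15, -1); (16, 1); (22, 1); (23, -1); (35, 1); (36, -1); (37, 1)]);
  ([:: (33, 1); (34, -1); (40, 1); (46, -1); (47, 1)], [:: (14, 1); (15, 1); (35, -1); (36, -1)], [:: (1, 1); (2, -1); (15, -1); (16, 1); (22, 1); (23, -1); (36, -1); (37, 1)]);
  ([:: (33, 1); (34, -1)], [:: (8, -1); (15, -1); (29, 1); (36, 1)], [:: (1, 1); (2, -1); (8, 1); (9, -1); (15, -1); (16, 1); (22, 1); (23, -1); (29, 1); (30, -1); (36, -1); (37, 1)]);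
  ([:: (27, 1); (41, 1); (46, -1); (48, 1)], [:: (7, -1); (14, -1); (28, 1); (35, 1); (42, 1); (43, 1)], [:: (0, 1); (21, 1); (42, -1); (43, 1); (44, -1)]);
  ([:: (25, 1); (26, -1); (31, -1); (39, 1); (40, -1); (46, 1); (47, -1)], [:: (1, -1); (15, -1); (16, -1); (22, 1); (36, 1); (37, 1)], [:: (2, -1); (7, 1); (8, -1); (9, 1); (23, -1); (28, 1); (29, -1); (30, 1)]);
  ([:: (31, -1); (32, -1); (33, 1); (46, -1); (47, 1)], [:: (15, 1); (16, 1); (36, -1); (37, -1)], [:: (7, 1); (8, -1); (28, 1); (29, -1)]);
  ([:: (31, 1); (38, 1); (41, -1)], [:: (0, -1); (2, 1); (15, 1); (16, 1); (21, 1); (23, -1); (36, -1); (37, -1)], [:: (2, 1); (16, -1); (23, 1); (37, -1)]);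
  ([:: (33, 1); (34, -1); (39, 1)], [:: (8, 1); (14, -1); (29, -1); (35, 1)], [:: (1, 1); (2, -1); (7, 1); (15, -1); (16, 1); (22, 1); (23, -1); (28, 1); (36, -1); (37, 1)]);
  ([:: (26, 1); (40, 1); (46, -1); (47, 1)], [:: (8, -1); (15, -1); (29, 1); (36, 1)], [:: (1, 1); (2, -1); (22, 1); (23, -1)]);
  ([:: (15, 1); (16, -1); (18, 1); (19, -1)], [:: (31, 1)], [:: (7, -1); (8, 1); (10, 1); (11, -1); (14, -1); (15, 1); (17, 1); (18, -1)]);
  ([:: (6, 1); (13, -1); (20, 1)], [:: (27, 1); (41, 1); (48, 1)], [:: (1, -1); (2, -1); (4, 1); (5, 1); (6, 1); (13, 1); (14, -1); (17, 1); (20, 1)]);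
  ([:: (1, 1); (4, 1); (15, 1); (18, 1)], [:: (31, 1); (32, 1); (46, 1)], [:: (8, -1); (9, -1); (11, 1); (12, 1); (15, -1); (16, -1); (18, 1); (19, 1)]);
  ([:: (2, 1); (5, 1); (14, -1); (16, 1); (17, -1); (19, 1)], [:: (38, 1); (39, 1); (45, 1)], [:: (0, -1); (3, 1); (7, -1); (10, 1)]);
  ([:: (1, 1); (4, 1); (8, -1); (11, -1); (15, 1); (18, 1)], [:: (25, 1); (26, -1); (32, 1); (33, -1); (34, 1); (39, 1); (40, -1); (46, 1); (47, -1)], [:: (8, 1); (9, 1); (11, -1); (12, -1); (16, 1); (19, -1)]);
  ([:: (14, 1); (17, 1)], [:: (24, 1); (25, 1); (27, -1); (38, 1); (39, 1); (41, -1); (45, 1); (46, 1); (48, -1)], [:: (8, -1); (9, -1); (11, 1); (12, 1); (15, -1); (16, -1); (18, 1); (19, 1)]);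
  ([:: (1, 1); (4, 1); (8, -1); (9, -1); (11, -1); (12, -1); (13, 1); (14, -1); (16, 1); (17, -1); (19, 1)], [:: (46, 1); (47, -1)], [:: (9, 1); (12, -1); (13, -1)]);
  ([:: (0, 1); (3, 1); (6, -1)], [:: (41, 1); (46, -1); (48, 1)], [:: (6, -1); (13, -1)]);
  ([:: (0, -1); (3, -1); (6, 1); (7, 1); (9, -1); (10, 1); (12, -1); (14, -1); (16, 1); (17, -1); (19, 1)], [:: (41, 1); (46, -1); (47, 1)], [:: (2, -1); (5, 1); (13, -1)]);
  ([:: (2, 1); (5, 1); (6, -1)], [:: (41, 1)], [:: (0, -1); (2, -1); (3, 1); (5, 1); (6, 1); (13, -1); (14, 1); (17, -1); (20, -1)]);
  ([:: (2, -1); (5, -1); (13, 1); (14, 1); (16, -1); (17, 1); (19, -1)], [:: (45, 1)], [:: (7, -1); (10, 1); (13, 1); (14, -1); (17, 1); (20, 1)]);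
  ([:: (1, 1); (4, 1)], [:: (32, 1); (34, -1); (39, 1)], [:: (1, -1); (4, 1); (9, 1); (12, -1); (15, 1); (16, 1); (18, -1); (19, -1)]);
  ([:: (0, 1); (2, -1); (3, 1); (5, -1); (7, -1); (9, 1); (10, -1); (12, 1); (14, 1); (16, -1); (17, 1); (19, -1)], [:: (24, 1); (25, 1); (26, -1); (41, -1); (46, 1); (47, -1)], [:: (2, 1); (5, -1)]);
  ([:: (14, 1); (17, 1)], [:: (24, -1); (27, 1); (31, -1); (38, -1); (41, 1); (45, -1); (48, 1)], [:: (8, -1); (9, -1); (11, 1); (12, 1); (14, 1); (15, -1); (16, -1); (17, -1); (18, 1); (19, 1)]);
  ([:: (1, 1); (4, 1); (8, -1); (11, -1); (14, -1); (17, -1); (20, 1)], [:: (34, 1); (46, -1); (47, 1)], [:: (13, -1); (16, -1); (19, 1)]);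
  ([:: (0, 1); (3, 1); (6, -1); (7, -1); (10, -1); (13, 1); (14, 1); (17, 1); (20, -1)], [:: (27, 1); (41, 1); (46, -1); (47, 1)], [:: (13, -1)]);
  ([:: (1, 1); (4, 1); (13, -1); (14, 1); (15, 1); (17, 1); (18, 1)], [:: (46, 1)], [:: (1, 1); (2, 1); (4, -1); (5, -1); (6, -1); (8, 1); (9, 1); (11, -1); (12, -1); (13, -1)]);
  ([:: (1, 1); (4, 1); (14, -1); (16, 1); (17, -1); (19, 1)], [:: (31, 1); (39, -1)], [:: (0, -1); (3, 1); (7, -1); (8, 1); (9, 1); (10, 1); (11, -1); (12, -1); (15, 1); (16, 1); (18, -1); (19, -1)]);
  ([:: (1, 1); (4, 1); (7, 1); (8, -1); (10, 1); (11, -1); (14, -1); (15, 1); (17, -1); (18, 1)], [:: (25, -1); (26, 1); (39, -1); (40, 1); (46, -1); (47, 1)], [:: (7, -1); (8, 1); (10, 1); (11, -1)]);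
  ([:: (2, 1); (5, 1); (6, -1); (14, -1); (16, 1); (17, -1); (19, 1)], [:: (41, 1); (45, 1)], [:: (0, 1); (3, -1); (13, 1); (14, -1); (17, 1); (20, 1)]);
  ([:: (1, 1); (2, -1); (4, 1); (5, -1)], [:: (39, 1)], [:: (0, -1); (1, 1); (2, 1); (3, 1); (4, -1); (5, -1); (7, -1); (10, 1)]);
  ([:: (2, -1); (5, -1); (9, 1); (12, 1); (14, 1); (16, -1); (17, 1); (19, -1)], [:: (24, -1); (25, -1); (26, 1); (38, -1); (39, -1); (40, 1); (46, -1); (47, 1)], [:: (7, 1); (10, -1)]);
  ([:: (6, 1); (13, -1); (14, -1); (17, -1); (20, 1)], [:: (27, -1); (41, -1); (45, 1); (48, -1)], [:: (13, 1); (14, -1); (17, 1); (20, 1)]);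
  ([:: (0, 1); (3, 1)], [:: (24, 1); (25, 1); (27, -1); (41, -1); (46, 1); (48, -1)], [:: (0, -1); (2, -1); (3, 1); (5, 1)]);
  ([:: (14, 1); (15, 1); (17, 1); (18, 1); (20, -1)], [:: (34, 1)], [:: (1, 1); (2, 1); (4, -1); (5, -1); (6, -1); (13, -1); (15, -1); (16, -2); (18, 1); (19, 2); (20, 1)]);
  ([:: (14, 1); (16, -1); (17, 1); (19, -1)], [:: (38, 1); (39, 1); (40, -1); (41, -1)], [:: (9, -1); (12, 1); (16, -1); (19, 1)]);
  ([:: (0, 1); (3, 1)], [:: (25, 1); (27, -1); (41, -1); (46, 1); (48, -1)], [:: (0, 1); (1, -1); (3, -1); (4, 1)]);
  ([:: (1, 1); (4, 1); (14, 1); (15, 1); (17, 1); (18, 1); (20, -1)], [:: (34, -1); (46, -1)], [:: (1, 1); (2, 1); (4, -1); (5, -1); (6, -1); (13, -1); (15, -1); (16, -1); (18, 1); (19, 1)]);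
  ([:: (14, 1); (17, 1); (20, -1)], [:: (34, 1); (45, -1); (48, 1)], [:: (13, -1); (20, -1)]);
  ([:: (2, 1); (5, 1); (7, 1); (9, -1); (10, 1); (12, -1); (14, -1); (16, 1); (17, -1); (19, 1)], [:: (24, 1); (25, 1); (26, -1); (39, 1); (40, -1); (46, 1); (47, -1)], [:: (2, 1); (5, -1); (7, -1); (10, 1)]);
  ([:: (7, 1); (9, -1); (10, 1); (12, -1); (14, -1); (16, 1); (17, -1); (19, 1)], [:: (33, 1); (34, -1); (40, 1); (46, -1); (47, 1)], [:: (2, 1); (5, -1); (9, 1); (12, -1)]);
  ([:: (7, 1); (8, 1); (9, -1); (10, 1); (11, 1); (12, -1); (14, -1); (15, -1); (16, 1); (17, -1); (18, -1); (19, 1)], [:: (33, 1); (34, -1)], [:: (8, -1); (9, -1); (11, 1); (12, 1)]);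
  ([:: (0, 1); (3, 1); (6, -1); (13, 1); (20, -1)], [:: (27, 1); (41, 1); (46, -1); (48, 1)], [:: (1, -1); (2, -1); (4, 1); (5, 1); (6, 1); (13, 1)]);
  ([:: (1, 1); (4, 1); (8, -1); (11, -1); (14, -1); (15, 1); (17, -1); (18, 1)], [:: (25, 1); (26, -1); (31, -1); (39, 1); (40, -1); (46, 1); (47, -1)], [:: (7, -1); (9, -1); (10, 1); (12, 1); (16, -1); (19, 1)]);
  ([:: (1, 1); (4, 1); (8, -1); (11, -1)], [:: (31, -1); (32, -1); (33, 1); (46, -1); (47, 1)], [:: (9, 1); (12, -1); (16, 1); (19, -1)]);
  ([:: (14, 1); (16, -1); (17, 1); (19, -1)], [:: (31, 1); (38, 1); (41, -1)], [:: (0, -1); (3, 1); (9, 1); (12, -1); (14, 1); (16, 1); (17, -1); (19, -1)]);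
  ([:: (1, 1); (4, 1); (7, 1); (9, -1); (10, 1); (12, -1); (14, -1); (16, 1); (17, -1); (19, 1)], [:: (33, 1); (34, -1); (39, 1)], [:: (2, -1); (5, 1); (8, 1); (11, -1)]);
  ([:: (7, 1); (10, 1); (14, -1); (17, -1)], [:: (26, 1); (40, 1); (46, -1); (47, 1)], [:: (8, -1); (9, -1); (11, 1); (12, 1)]);
  ([:: (1, -1); (2, -1); (8, 1); (9, 1); (22, 1); (23, 1); (29, -1); (30, -1)], [:: (15, 1); (16, -1); (18, 1); (19, -1)], [:: (25, 1)]);
  ([:: (2, -1); (7, -1); (14, -1); (23, 1); (28, 1); (35, 1); (42, 1); (43, 1); (44, 1)], [:: (6, 1); (13, -1); (20, 1)], [:: (45, 1); (47, 1); (48, 1)]);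
  ([:: (8, -1); (9, -1); (15, -1); (16, -1); (29, 1); (30, 1); (36, 1); (37, 1)], [:: (1, 1); (4, 1); (15, 1); (18, 1)], [:: (25, 1); (32, 1); (34, 1)]);
  ([:: (0, -1); (1, -1); (21, 1); (22, 1)], [:: (2, 1); (5, 1); (14, -1); (16, 1); (17, -1); (19, 1)], [:: (26, 1); (27, 1); (33, 1)]);
  ([:: (8, 1); (15, 1); (16, 1); (29, -1); (36, -1); (37, -1)], [:: (1, 1); (4, 1); (8, -1); (11, -1); (15, 1); (18, 1)], [:: (31, 1); (32, 1); (33, 1); (34, 1); (38, -1); (39, -1); (40, -1); (41, -1); (46, 1)]);
  ([:: (8, -1); (9, -1); (15, -1); (16, -1); (29, 1); (30, 1); (36, 1); (37, 1)], [:: (14, 1); (17, 1)], [:: (24, 1); (26, 1); (27, 1); (31, 1); (33, 1); (34, 1); (45, -1); (47, -1); (48, -1)]);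
  ([:: (15, 1); (36, -1); (43, -1)], [:: (1, 1); (4, 1); (8, -1); (9, -1); (11, -1); (12, -1); (13, 1); (14, -1); (16, 1); (17, -1); (19, 1)], [:: (34, 1); (41, -1)]);
  ([:: (42, -1); (43, -1)], [:: (0, 1); (3, 1); (6, -1)], [:: (34, -1); (47, 1); (48, 1)]);
  ([:: (14, -1); (35, 1); (43, -1)], [:: (0, -1); (3, -1); (6, 1); (7, 1); (9, -1); (10, 1); (12, -1); (14, -1); (16, 1); (17, -1); (19, 1)], [:: (34, -1); (41, 1); (47, 1)]);
  ([:: (0, -1); (2, 1); (14, -1); (21, 1); (23, -1); (35, 1); (42, 1); (43, -1); (44, -1)], [:: (2, 1); (5, 1); (6, -1)], [:: (47, 1)]);
  ([:: (1, -1); (2, -1); (22, 1); (23, 1); (43, 1); (44, 1)], [:: (2, -1); (5, -1); (13, 1); (14, 1); (16, -1); (17, 1); (19, -1)], [:: (27, 1)]);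
  ([:: (7, -1); (9, 1); (15, 1); (16, 1); (28, 1); (30, -1); (36, -1); (37, -1)], [:: (1, 1); (4, 1)], [:: (32, 1); (33, 1); (46, -1)]);
  ([:: (14, 1); (35, -1)], [:: (0, 1); (2, -1); (3, 1); (5, -1); (7, -1); (9, 1); (10, -1); (12, 1); (14, 1); (16, -1); (17, 1); (19, -1)], [:: (24, 1); (31, 1); (34, 1); (38, -1); (41, -1); (47, -1)]);
  ([:: (2, 1); (8, -1); (9, -1); (15, -1); (16, -1); (23, -1); (29, 1); (30, 1); (36, 1); (37, 1)], [:: (14, 1); (17, 1)], [:: (24, -1); (25, -1); (26, -1); (27, -1); (45, 1); (47, 1); (48, 1)]);
  ([:: (16, -1); (37, 1); (43, -1)], [:: (1, 1); (4, 1); (8, -1); (11, -1); (14, -1); (17, -1); (20, 1)], [:: (34, -1); (41, 1); (46, 1)]);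
  ([:: (43, -1)], [:: (0, 1); (3, 1); (6, -1); (7, -1); (10, -1); (13, 1); (14, 1); (17, 1); (20, -1)], [:: (34, -1); (41, 1); (45, 1); (47, 1)]);
  ([:: (7, 1); (8, 1); (14, 1); (15, 1); (28, -1); (29, -1); (35, -1); (36, -1); (42, -1); (43, -1)], [:: (1, 1); (4, 1); (13, -1); (14, 1); (15, 1); (17, 1); (18, 1)], [:: (34, 1)]);
  ([:: (0, -1); (1, -1); (8, 1); (9, 1); (15, 1); (16, 1); (21, 1); (22, 1); (29, -1); (30, -1); (36, -1); (37, -1)], [:: (1, 1); (4, 1); (14, -1); (16, 1); (17, -1); (19, 1)], [:: (25, 1); (33, -1)]);
  ([:: (1, -1); (8, 1); (22, 1); (29, -1)], [:: (1, 1); (4, 1); (7, 1); (8, -1); (10, 1); (11, -1); (14, -1); (15, 1); (17, -1); (18, 1)], [:: (31, -1); (33, -1); (34, -1); (38, 1); (40, 1); (41, 1)]);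
  ([:: (0, 1); (2, -1); (21, -1); (23, 1); (43, 1); (44, 1)], [:: (2, 1); (5, 1); (6, -1); (14, -1); (16, 1); (17, -1); (19, 1)], [:: (27, 1); (47, 1)]);
  ([:: (0, -1); (1, -1); (7, 1); (14, 1); (21, 1); (22, 1); (28, -1); (35, -1)], [:: (1, 1); (2, -1); (4, 1); (5, -1)], [:: (33, 1)]);
  ([:: (1, 1); (22, -1)], [:: (2, -1); (5, -1); (9, 1); (12, 1); (14, 1); (16, -1); (17, 1); (19, -1)], [:: (24, -1); (26, -1); (31, -1); (33, -1); (34, -1); (38, 1); (40, 1); (41, 1)]);
  ([:: (2, -1); (23, 1); (43, 1); (44, 1)], [:: (6, 1); (13, -1); (14, -1); (17, -1); (20, 1)], [:: (27, 1); (45, -1); (47, -1); (48, -1)]);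
  ([:: (0, -1); (14, -1); (21, 1); (35, 1)], [:: (0, 1); (3, 1)], [:: (24, 1); (31, 1); (34, 1); (45, -1); (47, -1); (48, -1)]);
  ([:: (7, 1); (9, -1); (14, 1); (16, -2); (28, -1); (30, 1); (35, -1); (37, 2); (42, -1); (43, -1); (44, 1)], [:: (14, 1); (15, 1); (17, 1); (18, 1); (20, -1)], [:: (46, 1)]);
  ([:: (15, -1); (16, -1); (36, 1); (37, 1)], [:: (14, 1); (16, -1); (17, 1); (19, -1)], [:: (26, 1); (33, 1); (40, -1); (47, -1)]);
  ([:: (0, 1); (7, -1); (21, -1); (28, 1)], [:: (0, 1); (3, 1)], [:: (31, 1); (34, 1); (45, -1); (47, -1); (48, -1)]);
  ([:: (7, 1); (9, -1); (14, 1); (16, -1); (28, -1); (30, 1); (35, -1); (37, 1); (42, -1); (43, -1)], [:: (1, 1); (4, 1); (14, 1); (15, 1); (17, 1); (18, 1); (20, -1)], [:: (34, -1); (46, -1)]);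
  ([:: (43, -1); (44, -1)], [:: (14, 1); (17, 1); (20, -1)], [:: (27, -1); (46, 1); (48, 1)]);
  ([:: (1, -1); (14, 1); (22, 1); (35, -1)], [:: (2, 1); (5, 1); (7, 1); (9, -1); (10, 1); (12, -1); (14, -1); (16, 1); (17, -1); (19, 1)], [:: (24, 1); (31, 1); (33, 1); (34, 1); (38, -1); (40, -1); (41, -1)]);
  ([:: (14, 1); (15, 1); (35, -1); (36, -1)], [:: (7, 1); (9, -1); (10, 1); (12, -1); (14, -1); (16, 1); (17, -1); (19, 1)], [:: (34, -1); (39, 1); (40, 1); (41, 1); (46, -1)]);
  ([:: (8, -1); (15, -1); (29, 1); (36, 1)], [:: (7, 1); (8, 1); (9, -1); (10, 1); (11, 1); (12, -1); (14, -1); (15, -1); (16, 1); (17, -1); (18, -1); (19, 1)], [:: (39, 1); (46, -1)]);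
  ([:: (7, -1); (14, -1); (28, 1); (35, 1); (42, 1); (43, 1)], [:: (0, 1); (3, 1); (6, -1); (13, 1); (20, -1)], [:: (34, -1); (45, 1); (47, 1); (48, 1)]);
  ([:: (1, -1); (15, -1); (16, -1); (22, 1); (36, 1); (37, 1)], [:: (1, 1); (4, 1); (8, -1); (11, -1); (14, -1); (15, 1); (17, -1); (18, 1)], [:: (25, -1); (31, 1); (33, 1); (34, 1); (38, -1); (40, -1); (41, -1)]);
  ([:: (15, 1); (16, 1); (36, -1); (37, -1)], [:: (1, 1); (4, 1); (8, -1); (11, -1)], [:: (25, -1); (32, -1); (34, -1); (39, 1); (41, 1)]);
  ([:: (0, -1); (2, 1); (15, 1); (16, 1); (21, 1); (23, -1); (36, -1); (37, -1)], [:: (14, 1); (16, -1); (17, 1); (19, -1)], [:: (25, 1); (26, 1); (47, -1)]);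
  ([:: (8, 1); (14, -1); (29, -1); (35, 1)], [:: (1, 1); (4, 1); (7, 1); (9, -1); (10, 1); (12, -1); (14, -1); (16, 1); (17, -1); (19, 1)], [:: (33, 1); (39, 1); (46, -1)]);
  ([:: (8, -1); (15, -1); (29, 1); (36, 1)], [:: (7, 1); (10, 1); (14, -1); (17, -1)], [:: (34, -1); (38, 1); (40, 1); (41, 1)]);
  ([:: (5, 1); (6, 1); (19, -1); (20, -1); (26, -1); (27, -1); (40, 1); (41, 1)], [:: (35, 1); (36, -1); (38, 1); (39, -1)], [:: (15, 1); (16, -1)]);
  ([:: (12, 1); (13, 1); (33, -1); (34, -1)], [:: (29, 1); (32, 1); (36, 1); (39, 1)], [:: (1, 1); (2, -1); (8, 1); (9, -1); (15, 1); (16, -1)]);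
  ([:: (3, -1); (10, 1); (20, -1); (24, 1); (31, -1); (41, 1)], [:: (21, -1); (22, 2); (23, 1); (24, -1); (25, 2); (26, 1); (43, -1); (44, -1); (46, -1); (47, -1)], [:: (0, 1); (14, 1); (16, 1)]);
  ([:: (3, 1); (10, -1); (17, -1); (18, -1); (24, -1); (31, 1); (38, 1); (39, 1)], [:: (21, -1); (22, 1); (24, -1); (25, 1)], [:: (14, 1); (16, 1)]);
  ([:: (4, 1); (6, -1); (11, -1); (13, 1); (20, 1); (25, -1); (27, 1); (32, 1); (34, -1); (41, -1)], [:: (35, -1); (36, 1); (38, -1); (39, 1); (42, 1); (43, -1); (45, 1); (46, -1)], [:: (0, -1)]);
  ([:: (4, -1); (5, 1); (10, -1); (17, 1); (18, 1); (19, -1); (20, 1); (25, 1); (26, -1); (31, 1); (38, -1); (39, -1); (40, 1); (41, -1)], [:: (36, -1); (37, -1); (39, -1); (40, -1)], [:: (0, -1); (1, -1); (7, -1); (8, -1)]);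
  ([:: (18, 1); (19, -1); (39, -1); (40, 1)], [:: (22, 1); (25, 1); (35, 1); (38, 1)], [:: (14, -1); (15, -1); (16, 1)]);
  ([:: (11, 1); (13, -1); (18, -1); (32, -1); (34, 1); (39, 1)], [:: (28, -1); (29, 2); (30, 1); (31, -1); (32, 2); (33, 1); (36, 1); (37, 1); (39, 1); (40, 1)], [:: (0, -1); (7, -1)]);
  ([:: (5, -1); (6, -1); (12, 1); (13, 1); (26, 1); (27, 1); (33, -1); (34, -1)], [:: (22, -1); (25, -1); (43, 1); (46, 1)], [:: (1, -1); (2, 1); (15, -1); (16, 1)]);
  ([:: (10, -1); (31, 1)], [:: (23, 1); (26, 1); (29, -1); (30, -1); (32, -1); (33, -1); (36, -1); (37, -1); (39, -1); (40, -1)], [:: (2, -1); (9, -1); (16, -1)]);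
  ([:: (3, 1); (5, 1); (6, 1); (10, -1); (12, -1); (13, -1); (17, -1); (18, -1); (19, 1); (20, -1); (24, -1); (26, -1); (27, -1); (31, 1); (33, 1); (34, 1); (38, 1); (39, 1); (40, -1); (41, 1)], [:: (22, -1); (25, -1)], [:: (0, 1); (1, 1); (7, 1); (8, 1); (14, 1); (15, 1)]);
  ([:: (13, 1); (34, -1)], [:: (28, -1); (29, 2); (30, 1); (31, -1); (32, 2); (33, 1); (35, 1); (38, 1); (42, -1); (43, 1); (44, 1); (45, -1); (46, 1); (47, 1)], [:: (9, 1)]);
  ([:: (20, 1); (41, -1)], [:: (21, 1); (22, -1); (23, -1); (24, 1); (25, -1); (26, -1); (42, -1); (43, 1); (44, 1); (45, -1); (46, 1); (47, 1)], [:: (0, -1); (14, -1)]);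
  ([:: (11, 1); (12, -1); (13, -1); (32, -1); (33, 1); (34, 1)], [:: (29, -1); (32, -1); (36, -1); (37, -1); (39, -1); (40, -1)], [:: (0, -1); (1, -1); (2, 1); (7, -1); (8, -1); (9, 1)]);
  ([:: (5, 1); (6, 1); (12, -1); (13, -1); (20, -1); (26, -1); (27, -1); (33, 1); (34, 1); (41, 1)], [:: (22, -1); (25, -1); (35, 1); (36, -1); (38, 1); (39, -1); (43, 1); (46, 1)], [:: (0, 1); (15, -1); (16, 1)]);
  ([:: (4, 1); (11, -1); (25, -1); (32, 1)], [:: (28, -1); (29, 2); (31, -1); (32, 2); (35, 1); (38, 1); (42, -1); (45, -1)], [:: (7, 1); (9, 1)]);
  ([:: (4, 1); (10, 1); (25, -1); (31, -1)], [:: (29, -1); (30, -1); (32, -1); (33, -1); (36, -1); (37, -1); (39, -1); (40, -1)], [:: (0, -1); (2, -1); (7, -1); (9, -1)]);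
  ([:: (18, -1); (39, 1)], [:: (21, 1); (22, -1); (24, 1); (25, -1); (28, -1); (31, -1); (35, -1); (38, -1)], [:: (0, 1); (7, 1); (14, 1)]);
  ([:: (3, 1); (6, 1); (10, -1); (24, -1); (27, -1); (31, 1)], [:: (43, 1); (44, 1); (46, 1); (47, 1)], [:: (2, 1)]);
  ([:: (4, -1); (5, 1); (11, 1); (12, -1); (13, -1); (25, 1); (26, -1); (32, -1); (33, 1); (34, 1)], [:: (37, -1); (40, -1); (43, -1); (46, -1)], [:: (0, 1); (1, 1); (2, -1); (7, 1); (8, 1)]);
  ([:: (3, 1); (5, 1); (6, 1); (10, -1); (12, -1); (13, -1); (24, -1); (26, -1); (27, -1); (31, 1); (33, 1); (34, 1)], [:: (22, 1); (25, 1)], [:: (0, 2); (1, 2); (2, -1); (7, 1); (8, 1); (14, 1); (15, 1)]);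
  ([:: (3, 1); (10, -1); (24, -1); (31, 1)], [:: (22, 1); (23, 1); (25, 1); (26, 1); (43, -1); (44, -1); (46, -1); (47, -1)], [:: (0, 1); (2, 1); (14, 1); (16, 1)]);
  ([:: (4, 1); (11, -1); (13, 1); (25, -1); (32, 1); (34, -1)], [:: (28, -1); (29, 2); (30, 1); (31, -1); (32, 2); (33, 1); (35, 1); (37, 1); (38, 1); (40, 1); (42, -1); (43, 1); (45, -1); (46, 1)], [:: (0, -1); (7, -1); (9, -1)]);
  ([:: (10, 1); (18, 1); (31, -1); (39, -1)], [:: (21, -1); (22, 1); (24, -1); (25, 1); (29, 1); (30, 1); (32, 1); (33, 1); (36, 1); (37, 1); (39, 1); (40, 1)], [:: (0, -1); (7, -1); (16, 1)]);
  ([:: (10, 1); (17, -1); (18, -1); (19, 1); (20, -1); (31, -1); (38, 1); (39, 1); (40, -1); (41, 1)], [:: (22, -1); (25, -1); (36, -1); (37, -1); (39, -1); (40, -1)], [:: (0, -1); (1, -1); (7, -1); (8, -1); (16, -1)]);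
  ([:: (4, 1); (5, -1); (11, -1); (12, 1); (25, -1); (26, 1); (32, 1); (33, -1)], [:: (36, -1); (39, -1); (43, 1); (46, 1)], [:: (7, -1); (8, -1)]);
  ([:: (10, 1); (17, -1); (20, -1); (31, -1); (38, 1); (41, 1)], [:: (21, 1); (22, -2); (23, -1); (24, 1); (25, -2); (26, -1); (36, -1); (37, -1); (39, -1); (40, -1)], [:: (16, 1)]);
  ([:: (4, 1); (11, -1); (25, -1); (32, 1)], [:: (29, 1); (32, 1); (36, 1); (39, 1); (43, -1); (46, -1)], [:: (0, 1); (1, 1); (2, -1); (7, -1); (9, -1)]);
  ([:: (12, -1); (13, -1); (18, 1); (33, 1); (34, 1); (39, -1)], [:: (29, -1); (32, -1); (35, -1); (38, -1)], [:: (0, 1); (7, 1); (15, -1); (16, 1)])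
].

End Scheme777.

Lemma check_scheme777 : check_scheme 7 scheme777.
Proof. by vm_compute. Qed.

Theorem mainTheorem2 (K : fieldType) : mxmul_rank_le K 7 7 7 250.
Proof. exact: check_scheme_mxmul_rank_le check_scheme777. Qed.
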